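(* Let $3\le l\le 9$ and let $k, r_1,\dots,r_l$ be integers with $r_1\le r_2\le\cdots\le r_l\le k$ and $2k+3\le r_1+r_2+r_3$. Then $$c(\mathbf r;k)=\binom{k+2}{2}-\sum_{i=1}^l\binom{k-r_i+2}{2}>0.$$
   Context: $c(\mathbf r;k)$ is the virtual dimension of the degree-$k$ part of $F[x,y,z]$ modulo the ideal generated by $p_i^{r_i}$ for $l$ points in $\mathbb P^2$; under the hypotheses all $r_i\le k$, so it is given by the displayed formula. *)

From mathcomp Require Import all_boot all_order all_algebra.
Set Implicit Arguments. Unset Strict Implicit. Unset Printing Implicit Defensive.
Import Order.TTheory GRing.Theory Num.Theory.
Local Open Scope ring_scope.

(* Binomial coefficient (n choose 2) for an integer n, taken to be 0 for
   n < 0 (never used with negative n under the theorem's hypotheses). *)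
Definition binom2z (n : int) : int :=
  if n < 0 then 0 else ('C(`|n|%N, 2))%:Z.

(* Virtual dimension c(r;k) = C(k+2,2) - sum_{i=1}^l C(k-r_i+2,2);
   the points are indexed 0..l-1, i.e. r_i is r (i-1). *)
Definition cvirt (l : nat) (r : nat -> int) (k : int) : int :=
  binom2z (k + 2) - \sum_(i < l) binom2z (k - r i + 2).

From mathcomp Require Import all_boot all_order all_algebra.
From mathcomp Require Import zify.
Set Implicit Arguments. Unset Strict Implicit. Unset Printing Implicit Defensive.
Import Order.TTheory GRing.Theory Num.Theory.
Local Open Scope ring_scope.

(* Put a_i = k - r_i + 2, so that C(k - r_i + 2, 2) = C(a_i, 2) with
   a_0 >= a_1 >= ... >= a_(l-1) >= 2, and the hypothesis on r_0 + r_1 + r_2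
   reads a_0 + a_1 + a_2 - 1 <= k + 2.  The at most six terms with i >= 3 are
   each bounded by C(a_2, 2), so the sum is at most
   C(a_0, 2) + C(a_1, 2) + 7 C(a_2, 2), which is strictly smaller than
   C(a_0 + a_1 + a_2 - 1, 2) <= C(k + 2, 2). *)

Lemma binom2zE (n : int) : 0 <= n -> 2 * binom2z n = n * (n - 1).
Proof.
case: n => [[|n]|] // _; rewrite /binom2z /=.
have := mul_bin_diag n.+1 1; rewrite bin1 /=.
lia.
Qed.

Lemma binom2z_ge0 (n : int) : 0 <= binom2z n.
Proof. by rewrite /binom2z; case: ifP. Qed.

Lemma ler_binom2z (m n : int) : 0 <= m -> m <= n -> binom2z m <= binom2z n.
Proof.
move=> m_ge0 le_mn; have [-> | m_gt0] := eqVneq m 0; first exact: binom2z_ge0.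
have n_ge0 : 0 <= n by lia.
have : 0 <= (n - m) * (n + m - 1) by apply: mulr_ge0; lia.
have := binom2zE m_ge0; have := binom2zE n_ge0; lia.
Qed.

Lemma binom2z_parts_lt (a b c : int) :
  1 <= c -> c <= b -> b <= a ->
  binom2z a + binom2z b + binom2z c *+ 7 < binom2z (a + b + c - 1).
Proof.
(* With a = c + x and b = c + y, twice the difference of the two sides is
   (x + y) (4 c - 2) + 2 x y + 2. *)
move=> c_ge1 le_cb le_ba.
have := @binom2zE (a + b + c - 1) ltac:(lia); have := @binom2zE a ltac:(lia).
have := @binom2zE b ltac:(lia); have := @binom2zE c ltac:(lia).
have : 0 <= (a - c) * (b - c) by apply: mulr_ge0; lia.
have : 0 <= (a + b - 2 * c) * (4 * c - 2) by apply: mulr_ge0; lia.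
lia.
Qed.

Lemma ler_sum_dominated_tail (R : numDomainType) (l : nat) (F : nat -> R) :
  (2 <= l)%N -> (forall i, (2 <= i < l)%N -> F i <= F 2%N) ->
  \sum_(i < l) F i <= F 0%N + F 1%N + F 2%N *+ (l - 2).
Proof.
move=> l_ge2 le_F2; rewrite -(big_mkord xpredT) big_ltn ?(ltnW l_ge2) // big_ltn //.
rewrite addrA lerD2l -sumr_const_nat !big_nat; apply: ler_sum => i.
exact: le_F2.
Qed.

Theorem mainTheorem8 (l : nat) (k : int) (r : nat -> int) :
  (3 <= l <= 9)%N ->
  (forall i j : nat, (i <= j < l)%N -> r i <= r j) ->
  r l.-1 <= k ->
  2 * k + 3 <= r 0%N + r 1%N + r 2%N ->
  0 < cvirt l r k.
Proof.
move=> /andP[l_ge3 l_le9] r_mono r_le_k r_sum.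
pose a i := k - r i + 2.
have a_anti i j : (i <= j < l)%N -> a j <= a i by move/r_mono; rewrite /a; lia.
have a_ge2 i : (i < l)%N -> 2 <= a i.
  by move=> il; have := r_mono i l.-1 ltac:(lia); rewrite /a; lia.
have tail : \sum_(i < l) binom2z (a i)
    <= binom2z (a 0%N) + binom2z (a 1%N) + binom2z (a 2%N) *+ (l - 2).
  apply: (ler_sum_dominated_tail (F := fun i => binom2z (a i))); first by lia.
  move=> i i_range; apply: ler_binom2z; last by apply: a_anti; lia.
  by have := a_ge2 i ltac:(lia); lia.
have head : binom2z (a 0%N) + binom2z (a 1%N) + binom2z (a 2%N) *+ 7
    < binom2z (a 0%N + a 1%N + a 2%N - 1).
  by apply: binom2z_parts_lt; [have := a_ge2 2%N l_ge3; lia | apply: a_anti; lia ..].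
have total : binom2z (a 0%N + a 1%N + a 2%N - 1) <= binom2z (k + 2).
  apply: ler_binom2z; last by rewrite /a; lia.
  by have := a_ge2 0%N; have := a_ge2 1%N; have := a_ge2 2%N; lia.
have few_points : binom2z (a 2%N) *+ (l - 2) <= binom2z (a 2%N) *+ 7.
  by apply: ler_wpMn2l; [exact: binom2z_ge0 | lia].
rewrite /cvirt subr_gt0; apply: le_lt_trans tail _; apply: lt_le_trans total.
by apply: le_lt_trans head; rewrite lerD2l.
Qed.
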